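(* Let $f\in U^N_{\rm per}(\epsilon\mathbb Z)$ with $\langle f\rangle_X=0$, assume $0<c_\psi\le\psi\le C_\psi$ and $N/p\in\mathbb N$, and let $u$, $u^0$, $\chi$ be the solutions of the atomistic problem, the homogenized problem and the cell problem. Then the corrector $u^{\rm c}$ belongs to $U^N_{\rm per}(\epsilon\mathbb Z)$ and, with the two-scale function $w(X_i,Y_j)=\chi(X_i,Y_j)Du^0(X_i)$, \[ |\langle u^{\rm c}\rangle_X|\le\epsilon^2\frac p2\|D_Xw\|_{L^1(N,p)},\qquad |u^{\rm c}-u|_{H^1}\le\epsilon\frac{C_\psi}{c_\psi}\|D_XT_Yw\|_{L^2(N)}. \]
   Context: Let $\epsilon>0$ and $N,p$ positive integers; $X_i=\epsilon i$, $Y_j=j$. $U^N_{\rm per}(\epsilon\mathbb Z)$: functions $u:\epsilon\mathbb Z\to\mathbb R$ with $u(X_{i+N})=u(X_i)$; $U^N_\#(\epsilon\mathbb Z)$: those with $\langle u\rangle_X:=\frac1N\sum_{i=1}^Nu(X_i)=0$. $\langle u,v\rangle_X=\frac1N\sum_{i=1}^Nu(X_i)v(X_i)$, $Du(X_i)=(u(X_{i+1})-u(X_i))/\epsilon$, $|u|_{H^1}=(\frac1N\sum_{i=1}^N|Du(X_i)|^2)^{1/2}$. Two-scale functions $g:\epsilon\mathbb Z\times\mathbb Z\to\mathbb R$ satisfy $g(X_{i+N},Y_j)=g(X_i,Y_j)=g(X_i,Y_{j+p})$; $D_Xg(X_i,Y_j)=(g(X_{i+1},Y_j)-g(X_i,Y_j))/\epsilon$,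 $D_Yg(X_i,Y_j)=g(X_i,Y_{j+1})-g(X_i,Y_j)$, $T_Yg(X_i,Y_j)=g(X_i,Y_{j+1})$, $\langle g\rangle_Y(X_i)=\frac1p\sum_{j=1}^pg(X_i,Y_j)$, $\|g\|_{L^1(N,p)}=\frac1{Np}\sum_{i=1}^N\sum_{j=1}^p|g(X_i,Y_j)|$, and $\|g\|_{L^2(N)}=(\frac1N\sum_{i=1}^N|g(X_i,Y_i)|^2)^{1/2}$ (norm of the restriction to the diagonal $Y=X/\epsilon$). $\psi$ is a two-scale function; $\psi^\epsilon(X_i)=\psi(X_i,X_i/\epsilon)$; $\psi^0(X_i)=\langle1/\psi(X_i,\cdot)\rangle_Y^{-1}$. Cell problem: $\chi$ two-scale with $\langle\chi(X_i,\cdot)\rangle_Y=0$ and $-D_Y(\psi D_Y\chi)=D_Y\psi$ everywhere. Atomistic problem: $u\in U^N_\#(\epsilon\mathbb Z)$ with $\langle\psi^\epsilon Du,Dv\rangle_X=\langle f,v\rangle_X$ for all $v\in U^N_{\rm per}(\epsilon\mathbb Z)$. Homogenized problem: $u^0\in U^N_\#(\epsilon\mathbb Z)$ with $\langle\psi^0Du^0,Dv\rangle_X=\langle f,v\rangle_X$ for all $v\in U^N_{\rm per}(\epsilon\mathbb Z)$. Corrector: $u^{\rm c}(X_i)=u^0(X_i)+\epsilon\chi(X_i,X_i/\epsilon)Du^0(X_i)$. *)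

From mathcomp Require Import all_boot all_order all_algebra.
From mathcomp Require Import reals.
Set Implicit Arguments. Unset Strict Implicit. Unset Printing Implicit Defensive.
Import Order.TTheory GRing.Theory Num.Theory.
Local Open Scope ring_scope.

(* Lattice functions u : eps Z -> R are represented by their values on the
   index i (u i stands for u(X_i), X_i = eps*i); two-scale functions
   g : eps Z x Z -> R by g i j = g(X_i, Y_j). *)

Section Defs.
Variable R : realType.

Definition per_fun (N : nat) (u : int -> R) : Prop :=
  forall i : int, u (i + N%:Z) = u i.

Definition avgX (N : nat) (u : int -> R) : R :=
  N%:R^-1 * \sum_(1 <= i < N.+1) u i%:Z.

Definition mean_zero (N : nat) (u : int -> R) : Prop := avgX N u = 0.

Definition Dlat (eps : R) (u : int -> R) : int -> R :=
  fun i => (u (i + 1) - u i) / eps.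

Definition H1semi (eps : R) (N : nat) (u : int -> R) : R :=
  Num.sqrt (avgX N (fun i => (Dlat eps u i) ^+ 2)).

Definition two_scale_per (N p : nat) (g : int -> int -> R) : Prop :=
  forall i j : int, g (i + N%:Z) j = g i j /\ g i (j + p%:Z) = g i j.

Definition DX (eps : R) (g : int -> int -> R) : int -> int -> R :=
  fun i j => (g (i + 1) j - g i j) / eps.
Definition DY (g : int -> int -> R) : int -> int -> R :=
  fun i j => g i (j + 1) - g i j.
Definition TY (g : int -> int -> R) : int -> int -> R :=
  fun i j => g i (j + 1).
Definition avgY (p : nat) (g : int -> int -> R) (i : int) : R :=
  p%:R^-1 * \sum_(1 <= j < p.+1) g i j%:Z.

Definition L1Np (N p : nat) (g : int -> int -> R) : R :=
  (N%:R * p%:R)^-1 *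
  \sum_(1 <= i < N.+1) \sum_(1 <= j < p.+1) `|g i%:Z j%:Z|.

(* norm of the restriction to the diagonal Y = X/eps, i.e. j = i *)
Definition L2N (N : nat) (g : int -> int -> R) : R :=
  Num.sqrt (N%:R^-1 * \sum_(1 <= i < N.+1) (g i%:Z i%:Z) ^+ 2).

Definition psi_eps (psi : int -> int -> R) : int -> R := fun i => psi i i.

Definition psi_hom (p : nat) (psi : int -> int -> R) : int -> R :=
  fun i => (avgY p (fun i j => (psi i j)^-1) i)^-1.

Definition cell_sol (N p : nat) (psi chi : int -> int -> R) : Prop :=
  two_scale_per N p chi /\
  (forall i : int, avgY p chi i = 0) /\
  (forall i j : int,
     - DY (fun i j => psi i j * DY chi i j) i j = DY psi i j).

Definition weak_sol (eps : R) (N : nat) (a f u : int -> R) : Prop :=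
  per_fun N u /\ mean_zero N u /\
  (forall v : int -> R, per_fun N v ->
     avgX N (fun i => a i * Dlat eps u i * Dlat eps v i) = avgX N (fun i => f i * v i)).

Definition atom_sol (eps : R) (N : nat) (psi : int -> int -> R) (f u : int -> R) :=
  weak_sol eps N (psi_eps psi) f u.

Definition hom_sol (eps : R) (N p : nat) (psi : int -> int -> R) (f u0 : int -> R) :=
  weak_sol eps N (psi_hom p psi) f u0.

Definition corrector (eps : R) (chi : int -> int -> R) (u0 : int -> R) : int -> R :=
  fun i => u0 i + eps * chi i i * Dlat eps u0 i.

End Defs.

From mathcomp Require Import all_boot all_order all_algebra.
From mathcomp Require Import reals.
From mathcomp Require Import ring lra.
Set Implicit Arguments. Unset Strict Implicit. Unset Printing Implicit Defensive.
Import Order.TTheory GRing.Theory Num.Theory.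
Local Open Scope ring_scope.

(* The corrector is periodic because chi is p-periodic in Y and p divides N;
   its mean is eps times the mean of w on the diagonal Y = X/eps.  Every row
   w(X_i, .) has zero mean over a period, so averaging
   2 w(i,i) - w(i-s,i) - w(i-s+p,i) over the shifts s = 0..p-1 returns 2p times
   the diagonal sum, while each such term is bounded by the variation of
   w(., Y_i) over a window of length p: this is the L^1 bound.
   The cell problem says that the flux psi (1 + D_Y chi) does not depend on Y,
   hence equals psi^0.  Therefore psi^eps D u^c = psi^0 D u^0
   + eps psi^eps D_X T_Y w on the diagonal, and testing both equations with
   e = u^c - u gives c |e|^2 <= <psi^eps De, De> = eps <psi^eps D_X T_Y w, De>
   <= eps C ||D_X T_Y w|| |e|, by Cauchy-Schwarz. *)

Lemma shift1_invariant_const (T : Type) (K : int -> T) :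
  (forall j, K (j + 1) = K j) -> forall j, K j = K 0.
Proof.
move=> K1.
have K_addn a (k : nat) : K (a + k%:Z) = K a.
  elim: k => [|k IH]; first by rewrite addr0.
  by rewrite -addn1 PoszD addrA K1.
by case=> k; [rewrite -[Posz k]add0r K_addn | rewrite -(K_addn _ k.+1) NegzE addNr].
Qed.

Section PeriodicSums.
Variables (V : zmodType) (n : nat) (g : int -> V).
Hypothesis g_per : forall x, g (x + n%:Z) = g x.

Lemma periodic_dvd m : (n %| m)%N -> forall x, g (x + m%:Z) = g x.
Proof.
case/dvdnP=> k ->; elim: k => [|k IH] x; first by rewrite mul0n addr0.
by rewrite mulSn PoszD addrA IH g_per.
Qed.

Lemma sum_window_periodic a :
  \sum_(0 <= t < n) g (a + t%:Z) = \sum_(1 <= i < n.+1) g i%:Z.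
Proof.
pose F b := \sum_(0 <= t < n) g (b + t%:Z).
have F1 b : F (b + 1) = F b.
  have -> : F (b + 1) = \sum_(1 <= t < n.+1) g (b + t%:Z).
    by rewrite big_add1; apply: eq_bigr => t _; rewrite intS addrA.
  apply: (addIr (g (b + 0%:Z))); rewrite addrC -big_ltn // big_nat_recr //=.
  by rewrite g_per addr0.
rewrite -[LHS]/(F a) (shift1_invariant_const F1) -(F1 0) /F add0r big_add1.
by apply: eq_bigr => t _; rewrite intS.
Qed.

Lemma sum_shift_periodic c :
  \sum_(1 <= i < n.+1) g (i%:Z + c) = \sum_(1 <= i < n.+1) g i%:Z.
Proof.
rewrite -(sum_window_periodic (c + 1)) big_add1.
by apply: eq_bigr => t _; rewrite intS addrC addrA.
Qed.

End PeriodicSums.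

Section DiagonalSums.
Variables (V : zmodType) (N p : nat) (W : int -> int -> V).
Hypotheses (WxN : forall i j, W (i + N%:Z) j = W i j)
  (WyN : forall i j, W i (j + N%:Z) = W i j)
  (Wyp : forall i j, W i (j + p%:Z) = W i j).

Lemma sum_diag_shift c :
  \sum_(1 <= i < N.+1) W (i%:Z + c) i%:Z = \sum_(1 <= i < N.+1) W i%:Z (i%:Z - c).
Proof.
have per x : W (x + N%:Z) (x + N%:Z - c) = W x (x - c).
  by rewrite addrAC WxN WyN.
rewrite -(sum_shift_periodic (g := fun x => W x (x - c)) per c).
by apply: eq_bigr => i _; rewrite addrK.
Qed.

Lemma sum_diag_window a :
  \sum_(0 <= s < p) \sum_(1 <= i < N.+1) W i%:Z (i%:Z + (a + s%:Z)) =
  \sum_(1 <= i < N.+1) \sum_(1 <= j < p.+1) W i%:Z j%:Z.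
Proof.
rewrite exchange_big /=; apply: eq_bigr => i _.
rewrite -(sum_window_periodic (Wyp i%:Z) (i%:Z + a)).
by apply: eq_bigr => s _; rewrite addrA.
Qed.

End DiagonalSums.

Lemma norm_tent_le_variation (R : numDomainType) (h : int -> R) a (s p : nat) :
  (s <= p)%N ->
  `|2 * h (a + s%:Z) - h a - h (a + p%:Z)| <=
  \sum_(0 <= t < p) `|h (a + t%:Z + 1) - h (a + t%:Z)|.
Proof.
move=> sp; pose H (k : nat) := h (a + k%:Z).
have incr k : h (a + k%:Z + 1) - h (a + k%:Z) = H k.+1 - H k.
  by rewrite /H intS (addrC 1) addrA.
under eq_bigr do rewrite incr.
rewrite (big_cat_nat (leq0n s) sp) /=.
have -> : 2 * h (a + s%:Z) - h a - h (a + p%:Z) = (H s - H 0) - (H p - H s).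
  by rewrite /H addr0; ring.
rewrite -(telescope_sumr _ (leq0n s)) -(telescope_sumr _ sp).
by apply: le_trans (ler_normB _ _) _; apply: lerD; apply: ler_norm_sum.
Qed.

Lemma sum_normM_le_sqrt (R : rcfType) (I : Type) (r : seq I) (a b : I -> R) :
  \sum_(i <- r) `|a i| * `|b i| <=
  Num.sqrt (\sum_(i <- r) a i ^+ 2) * Num.sqrt (\sum_(i <- r) b i ^+ 2).
Proof.
set S := \sum_(i <- r) a i ^+ 2; set T := \sum_(i <- r) b i ^+ 2.
set P := \sum_(i <- r) `|a i| * `|b i|.
have S0 : 0 <= S by apply: sumr_ge0 => i _; exact: sqr_ge0.
have T0 : 0 <= T by apply: sumr_ge0 => i _; exact: sqr_ge0.
have P0 : 0 <= P by apply: sumr_ge0 => i _; rewrite mulr_ge0.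
have lagrange :
  \sum_(i <- r) \sum_(j <- r) (`|a i| * `|b j| - `|a j| * `|b i|) ^+ 2 =
  2 * (S * T - P ^+ 2).
  have ST : S * T = \sum_(i <- r) \sum_(j <- r) a i ^+ 2 * b j ^+ 2.
    exact: big_distrlr.
  have PP : P ^+ 2 = \sum_(i <- r) \sum_(j <- r)
                     (`|a i| * `|b i|) * (`|a j| * `|b j|).
    by rewrite expr2 big_distrlr.
  have swap : \sum_(i <- r) \sum_(j <- r) a j ^+ 2 * b i ^+ 2 =
              \sum_(i <- r) \sum_(j <- r) a i ^+ 2 * b j ^+ 2.
    exact: exchange_big.
  transitivity (\sum_(i <- r) \sum_(j <- r) a i ^+ 2 * b j ^+ 2 +
                \sum_(i <- r) \sum_(j <- r) a j ^+ 2 * b i ^+ 2 -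
     2 * \sum_(i <- r) \sum_(j <- r) (`|a i| * `|b i|) * (`|a j| * `|b j|));
    last by rewrite swap -ST -PP; ring.
  rewrite mulr_sumr -big_split -sumrB /=; apply: eq_bigr => i _.
  rewrite !mulr_sumr -!big_split -sumrB /=; apply: eq_bigr => j _.
  rewrite -(real_normK (num_real (a i))) -(real_normK (num_real (a j))).
  rewrite -(real_normK (num_real (b i))) -(real_normK (num_real (b j))).
  ring.
have PST : P ^+ 2 <= S * T.
  rewrite -subr_ge0 -(pmulr_rge0 _ (ltr0n R 2)) -lagrange.
  by apply: sumr_ge0 => i _; apply: sumr_ge0 => j _; exact: sqr_ge0.
rewrite -sqrtrM // -(ger0_norm P0) -sqrtr_sqr ler_sqrt //.
exact: mulr_ge0.
Qed.

Lemma diag_sum_le_variation (R : realFieldType) (N p : nat)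
    (W : int -> int -> R) :
  (0 < p)%N -> (p %| N)%N ->
  (forall i j, W (i + N%:Z) j = W i j) -> (forall i j, W i (j + p%:Z) = W i j) ->
  (forall i, \sum_(1 <= j < p.+1) W i j%:Z = 0) ->
  `|\sum_(1 <= i < N.+1) W i%:Z i%:Z| <=
  (\sum_(1 <= i < N.+1) \sum_(1 <= j < p.+1) `|W (i%:Z + 1) j%:Z - W i%:Z j%:Z|) / 2.
Proof.
move=> p0 pN WxN Wyp W0.
have WyN i j : W i (j + N%:Z) = W i j by exact: (periodic_dvd (Wyp i)).
pose D x y : R := `|W (x + 1) y - W x y|.
have DxN x y : D (x + N%:Z) y = D x y by rewrite /D addrAC !WxN.
have DyN x y : D x (y + N%:Z) = D x y by rewrite /D !WyN.
have Dyp x y : D x (y + p%:Z) = D x y by rewrite /D !Wyp.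
set S := \sum_(1 <= i < N.+1) W i%:Z i%:Z.
set T := \sum_(1 <= i < N.+1) \sum_(1 <= j < p.+1) D i%:Z j%:Z.
have shifted_diag0 c :
    \sum_(0 <= s < p) \sum_(1 <= i < N.+1) W (i%:Z + (c - s%:Z)) i%:Z = 0.
  transitivity (\sum_(0 <= s < p) \sum_(1 <= i < N.+1)
                  W i%:Z (i%:Z + (- c + s%:Z))).
    apply: eq_bigr => s _; rewrite (sum_diag_shift WxN WyN).
    by apply: eq_bigr => i _; rewrite opprB (addrC (- _)).
  rewrite (sum_diag_window N Wyp); apply: big1 => i _; exact: W0.
have tents : 2 * p%:R * S = \sum_(0 <= s < p) \sum_(1 <= i < N.+1)
    (2 * W i%:Z i%:Z - W (i%:Z + (0 - s%:Z)) i%:Z - W (i%:Z + (p%:Z - s%:Z)) i%:Z).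
  under eq_bigr do rewrite !sumrB -mulr_sumr.
  rewrite !sumrB !shifted_diag0 !subr0 sumr_const_nat subn0 -/S.
  by rewrite mulrAC (mulr_natr _ p).
have tent_bound s i : (s < p)%N ->
    `|2 * W i i - W (i + (0 - s%:Z)) i - W (i + (p%:Z - s%:Z)) i| <=
    \sum_(0 <= t < p) D (i + (t%:Z - s%:Z)) i.
  move=> sp; rewrite sub0r (addrC p%:Z) addrA.
  have := norm_tent_le_variation (W^~ i) (i - s%:Z) (ltnW sp).
  rewrite subrK => /le_trans; apply; apply: ler_sum => t _.
  by rewrite /D addrA (addrAC i).
have variation : \sum_(0 <= s < p) \sum_(1 <= i < N.+1) \sum_(0 <= t < p)
    D (i%:Z + (t%:Z - s%:Z)) i%:Z = p%:R * T.
  transitivity (\sum_(0 <= t < p) \sum_(0 <= s < p) \sum_(1 <= i < N.+1)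
                  D i%:Z (i%:Z + (- t%:Z + s%:Z))).
    under eq_bigr do rewrite exchange_big /=.
    rewrite exchange_big /=; apply: eq_bigr => t _; apply: eq_bigr => s _.
    rewrite (sum_diag_shift DxN DyN); apply: eq_bigr => i _.
    by rewrite opprB (addrC (- _)).
  under eq_bigr do rewrite (sum_diag_window N Dyp).
  by rewrite sumr_const_nat subn0 mulr_natl.
have p_gt0 : 0 < p%:R :> R by rewrite ltr0n.
have : `|2 * p%:R * S| <= p%:R * T.
  rewrite -variation tents; apply: le_trans (ler_norm_sum _ _ _) _.
  rewrite big_nat [X in _ <= X]big_nat; apply: ler_sum => s /andP [_ sp].
  apply: le_trans (ler_norm_sum _ _ _) _; apply: ler_sum => i _.
  exact: tent_bound.
rewrite normrM ger0_norm ?mulr_ge0 // -mulrA mulrCA ler_pM2l // => bound.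
by rewrite ler_pdivlMr // mulrC.
Qed.

Section LatticeAverages.
Variables (R : realType) (N : nat).
Implicit Types (a b : int -> R).

Lemma avgXD a b : avgX N (fun i => a i + b i) = avgX N a + avgX N b.
Proof. by rewrite /avgX big_split mulrDr. Qed.

Lemma avgXB a b : avgX N (fun i => a i - b i) = avgX N a - avgX N b.
Proof. by rewrite /avgX sumrB mulrBr. Qed.

Lemma avgXZ (c : R) a : avgX N (fun i => c * a i) = c * avgX N a.
Proof. by rewrite /avgX -mulr_sumr mulrCA. Qed.

Lemma ler_avgX a b : (forall i, a i <= b i) -> avgX N a <= avgX N b.
Proof. by move=> ab; rewrite ler_wpM2l ?invr_ge0 // ler_sum. Qed.

Lemma avgX_normM_le_sqrt a b :
  avgX N (fun i => `|a i| * `|b i|) <=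
  Num.sqrt (avgX N (fun i => a i ^+ 2)) * Num.sqrt (avgX N (fun i => b i ^+ 2)).
Proof.
have N0 : 0 <= N%:R^-1 :> R by rewrite invr_ge0.
rewrite /avgX !sqrtrM // mulrACA -expr2 sqr_sqrtr // ler_wpM2l //.
exact: sum_normM_le_sqrt.
Qed.

End LatticeAverages.

Lemma per_Dlat (R : realType) (eps : R) N (u : int -> R) :
  per_fun N u -> per_fun N (Dlat eps u).
Proof. by move=> uN i; rewrite /Dlat addrAC !uN. Qed.

Lemma sum_DY_eq0 (R : realType) (p : nat) (g : int -> int -> R) i :
  (forall j, g i (j + p%:Z) = g i j) -> \sum_(1 <= j < p.+1) DY g i j%:Z = 0.
Proof.
move=> gp; rewrite (telescope_sumr_eq (fun k => g i k%:Z)) //.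
  by rewrite intS addrC gp addNr.
by move=> k _; rewrite /DY intS (addrC 1).
Qed.

Lemma L1Np_DX (R : realType) (eps : R) N p (W : int -> int -> R) : 0 < eps ->
  L1Np N p (DX eps W) = L1Np N p (fun i j => W (i + 1) j - W i j) / eps.
Proof.
move=> eps_gt0; rewrite /L1Np -mulrA mulr_suml; congr (_ * _).
apply: eq_bigr => i _; rewrite mulr_suml; apply: eq_bigr => j _.
by rewrite /DX normrM normfV (gtr0_norm eps_gt0).
Qed.

Lemma le_div_of_mul_sqr_le (R : realFieldType) (c k x : R) :
  0 < c -> 0 <= x -> 0 <= k -> c * x ^+ 2 <= k * x -> x <= k / c.
Proof.
move=> c_gt0 x_ge0 k_ge0 cxk; rewrite ler_pdivlMr //.
have [->|x_neq0] := eqVneq x 0; first by rewrite mul0r.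
have x_gt0 : 0 < x by rewrite lt_def x_neq0.
by rewrite -(ler_pM2r x_gt0) mulrAC -expr2 mulrC.
Qed.

Section Corrector.
Variables (R : realType) (eps : R) (N p : nat) (psi chi : int -> int -> R).
Variable u0 : int -> R.
Hypotheses (p_gt0 : (0 < p)%N) (pN : (p %| N)%N).
Hypothesis chi_per : two_scale_per N p chi.

Local Notation w := (fun i j => chi i j * Dlat eps u0 i).
Local Notation uc := (corrector eps chi u0).

Let chi_xN i j : chi (i + N%:Z) j = chi i j. Proof. by case: (chi_per i j). Qed.
Let chi_yp i j : chi i (j + p%:Z) = chi i j. Proof. by case: (chi_per i j). Qed.

Lemma corrector_per : per_fun N u0 -> per_fun N uc.
Proof.
move=> u0N i; rewrite /corrector u0N chi_xN (per_Dlat eps u0N).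
by rewrite (periodic_dvd (chi_yp i) pN).
Qed.

Lemma avgX_corrector :
  mean_zero N u0 -> avgX N uc = eps * avgX N (fun i => w i i).
Proof.
move=> u0m.
transitivity (avgX N (fun i => u0 i + eps * (chi i i * Dlat eps u0 i))).
  by rewrite /avgX; congr (_ * _); apply: eq_bigr => i _; rewrite mulrA.
by rewrite avgXD avgXZ u0m add0r.
Qed.

Lemma corrector_mean_bound :
  (0 < N)%N -> 0 < eps -> per_fun N u0 -> mean_zero N u0 ->
  (forall i, avgY p chi i = 0) ->
  `|avgX N uc| <= eps ^+ 2 * (p%:R / 2) * L1Np N p (DX eps w).
Proof.
move=> N_gt0 eps_gt0 u0N u0m chi_avg.
have w_xN i j : w (i + N%:Z) j = w i j by rewrite chi_xN (per_Dlat eps u0N).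
have w_yp i j : w i (j + p%:Z) = w i j by rewrite chi_yp.
have w_row0 i : \sum_(1 <= j < p.+1) w i j%:Z = 0.
  have := chi_avg i; rewrite /avgY -mulr_suml => /eqP.
  by rewrite mulf_eq0 invr_eq0 pnatr_eq0 gtn_eqF //= => /eqP ->; rewrite mul0r.
rewrite avgX_corrector // L1Np_DX // /L1Np /avgX.
move: (diag_sum_le_variation p_gt0 pN w_xN w_yp w_row0) => /=.
move: (\sum_(1 <= i < N.+1) \sum_(1 <= j < p.+1) _) => T.
move: (\sum_(1 <= i < N.+1) _) => S ST.
rewrite [X in _ <= X](_ : _ = eps * (N%:R^-1 * (T / 2))); last first.
  by field; rewrite !gt_eqF ?ltr0n.
rewrite !normrM normfV normr_nat (gtr0_norm eps_gt0).
by apply: ler_wpM2l; [exact: ltW | apply: ler_wpM2l; rewrite ?invr_ge0].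
Qed.

Lemma cell_flux_eq_psi_hom :
  (forall i j, psi i j != 0) ->
  (forall i j, - DY (fun i j => psi i j * DY chi i j) i j = DY psi i j) ->
  forall i j, psi i j * (1 + DY chi i j) = psi_hom p psi i.
Proof.
move=> psi0 cell i j; pose K j := psi i j * (1 + DY chi i j).
have K1 j' : K (j' + 1) = K j' by have := cell i j'; rewrite /K /DY; lra.
rewrite -[LHS]/(K j) (shift1_invariant_const K1 j); set k := K 0.
set Q := \sum_(1 <= j < p.+1) (psi i j%:Z)^-1.
have kQ : k * Q = p%:R.
  rewrite mulr_sumr (eq_bigr (fun j => 1 + DY chi i j%:Z)) => [|j' _].
    by rewrite big_split /= (sum_DY_eq0 (chi_yp i)) addr0 sumr_const_nat subSS subn0.
  by rewrite /k -(shift1_invariant_const K1 j'%:Z) /K mulrAC mulfV // mul1r.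
have Q0 : Q != 0.
  by apply: contra_eq_neq kQ => ->; rewrite mulr0 eq_sym pnatr_eq0 gtn_eqF.
by rewrite /psi_hom /avgY -/Q invfM invrK -kQ mulfK.
Qed.

Lemma Dlat_corrector i : eps != 0 ->
  Dlat eps uc i = Dlat eps u0 i * (1 + DY chi i i) + eps * DX eps (TY w) i i.
Proof. by move=> eps0; rewrite /corrector /DX /TY /DY /Dlat; field. Qed.

Lemma corrector_energy_identity (f u : int -> R) :
  eps != 0 -> (forall i j, psi i j != 0) ->
  (forall i j, - DY (fun i j => psi i j * DY chi i j) i j = DY psi i j) ->
  atom_sol eps N psi f u -> hom_sol eps N p psi f u0 ->
  let e i := uc i - u i in
  avgX N (fun i => psi_eps psi i * Dlat eps e i * Dlat eps e i) =
  eps * avgX N (fun i => psi_eps psi i * DX eps (TY w) i i * Dlat eps e i).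
Proof.
move=> eps0 psi0 cell [uN [_ uW]] [u0N [_ u0W]] e.
have eN : per_fun N e by move=> i; rewrite /e uN (corrector_per u0N).
have De i : Dlat eps e i = Dlat eps uc i - Dlat eps u i.
  by rewrite /e /Dlat; field.
transitivity (avgX N (fun i =>
  psi_hom p psi i * Dlat eps u0 i * Dlat eps e i +
  eps * (psi_eps psi i * DX eps (TY w) i i * Dlat eps e i) -
  psi_eps psi i * Dlat eps u i * Dlat eps e i)).
  rewrite /avgX; congr (_ * _); apply: eq_bigr => i _.
  rewrite -(cell_flux_eq_psi_hom psi0 cell i i) /psi_eps.
  set d := Dlat eps e i; rewrite {1}/d De (Dlat_corrector i eps0); ring.
by rewrite avgXB avgXD avgXZ u0W // uW // addrAC subrr add0r.
Qed.

Lemma corrector_H1_bound (f u : int -> R) (c_psi C_psi : R) :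
  0 < eps -> 0 < c_psi -> (forall i j, c_psi <= psi i j <= C_psi) ->
  (forall i j, - DY (fun i j => psi i j * DY chi i j) i j = DY psi i j) ->
  atom_sol eps N psi f u -> hom_sol eps N p psi f u0 ->
  H1semi eps N (fun i => uc i - u i) <=
  eps * (C_psi / c_psi) * L2N N (DX eps (TY w)).
Proof.
move=> eps_gt0 c_gt0 psi_bnd cell usol u0sol.
have psi_gt0 i j : 0 < psi i j.
  by have /andP [cpsi _] := psi_bnd i j; exact: lt_le_trans cpsi.
have C_gt0 : 0 < C_psi.
  by have /andP [_] := psi_bnd 0 0; apply: lt_le_trans (psi_gt0 0 0).
have /= energy := corrector_energy_identity (lt0r_neq0 eps_gt0)
  (fun i j => lt0r_neq0 (psi_gt0 i j)) cell usol u0sol.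
set De := Dlat eps _ in energy *; set z := fun i => DX eps (TY w) i i.
set A := avgX N (fun i => De i ^+ 2); set Z := avgX N (fun i => z i ^+ 2).
have A_ge0 : 0 <= A.
  by rewrite mulr_ge0 ?invr_ge0 // sumr_ge0 // => i _; exact: sqr_ge0.
have lower : c_psi * A <= avgX N (fun i => psi_eps psi i * De i * De i).
  rewrite -avgXZ; apply: ler_avgX => i; rewrite -mulrA -expr2.
  by rewrite ler_wpM2r ?sqr_ge0 //; have /andP [] := psi_bnd i i.
have upper : avgX N (fun i => psi_eps psi i * z i * De i) <=
             C_psi * (Num.sqrt Z * Num.sqrt A).
  apply: le_trans (ler_wpM2l (ltW C_gt0) (avgX_normM_le_sqrt N z De)).
  rewrite -avgXZ; apply: ler_avgX => i.
  apply: le_trans (ler_norm _) _; rewrite !normrM (gtr0_norm (psi_gt0 i i)) -mulrA.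
  by rewrite ler_wpM2r ?mulr_ge0 //; have /andP [] := psi_bnd i i.
rewrite /H1semi /L2N -/De -/A -[_ * \sum_(1 <= i < N.+1) _]/Z mulrA mulrAC.
apply: le_div_of_mul_sqr_le; rewrite ?sqrtr_ge0 //.
  by rewrite !mulr_ge0 ?sqrtr_ge0 ?ltW.
rewrite sqr_sqrtr //; apply: le_trans lower _; rewrite energy -!mulrA.
by apply: ler_wpM2l; [exact: ltW | exact: upper].
Qed.

End Corrector.

Theorem lemma4p4 (R : realType) (eps : R) (N p : nat)
  (psi chi : int -> int -> R) (f u u0 : int -> R) (c_psi C_psi : R) :
  0 < eps -> (0 < N)%N -> (0 < p)%N -> (p %| N)%N ->
  per_fun N f -> avgX N f = 0 ->
  two_scale_per N p psi ->
  0 < c_psi -> (forall i j : int, c_psi <= psi i j <= C_psi) ->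
  atom_sol eps N psi f u ->
  hom_sol eps N p psi f u0 ->
  cell_sol N p psi chi ->
  let w := fun i j => chi i j * Dlat eps u0 i in
  let uc := corrector eps chi u0 in
  per_fun N uc /\
  `|avgX N uc| <= eps ^+ 2 * (p%:R / 2) * L1Np N p (DX eps w) /\
  H1semi eps N (fun i => uc i - u i) <= eps * (C_psi / c_psi) * L2N N (DX eps (TY w)).
Proof.
move=> eps_gt0 N_gt0 p_gt0 pN _ _ _ c_gt0 psi_bnd usol u0sol
  [chi_per [chi_avg cell]] w uc.
have [u0N [u0m _]] := u0sol.
split; first exact: corrector_per pN chi_per u0N.
split.
  exact: corrector_mean_bound p_gt0 pN chi_per N_gt0 eps_gt0 u0N u0m chi_avg.
exact (corrector_H1_bound p_gt0 pN chi_per eps_gt0 c_gt0 psi_bnd cell usol u0sol).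
Qed.
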